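(* Let $m,n$ be positive integers and let $X$ have Snedecor's $F$-distribution with $m$ and $n$ degrees of freedom, i.e. density $f(x)=\frac{\Gamma(\frac{n+m}2)(\frac mn)^{m/2}x^{(m-2)/2}}{\Gamma(\frac m2)\Gamma(\frac n2)(1+\frac mnx)^{(n+m)/2}}$ for $0<x<\infty$. Then $$\Pr\{X\ge x\}\le x^{m/2}\Big(\frac{n+m}{n+mx}\Big)^{(m+n)/2}\quad\text{for } x\ge1,\qquad \Pr\{X\le x\}\le x^{m/2}\Big(\frac{n+m}{n+mx}\Big)^{(m+n)/2}\quad\text{for } 0<x\le1,$$ and the function $x\mapsto x^{m/2}\big(\frac{n+m}{n+mx}\big)^{(m+n)/2}$ is monotonically increasing on $(0,1)$ and monotonically decreasing on $(1,\infty)$. *)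

From Stdlib Require Import Reals.
From Coquelicot Require Import Coquelicot.
Open Scope R_scope.

Definition Gamma (s : R) : R :=
  RInt_gen (fun t => Rpower t (s - 1) * exp (- t)) (at_right 0) (Rbar_locally p_infty).

Definition F_density (m n : nat) (x : R) : R :=
  Gamma ((INR n + INR m) / 2) * Rpower (INR m / INR n) (INR m / 2)
    * Rpower x ((INR m - 2) / 2)
  / (Gamma (INR m / 2) * Gamma (INR n / 2)
     * Rpower (1 + INR m / INR n * x) ((INR n + INR m) / 2)).

Definition F_upper_tail (m n : nat) (x : R) : R :=
  RInt_gen (F_density m n) (at_point x) (Rbar_locally p_infty).

Definition F_cdf (m n : nat) (x : R) : R :=
  RInt_gen (F_density m n) (at_right 0) (at_point x).

Definition F_bound (m n : nat) (x : R) : R :=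
  Rpower x (INR m / 2)
  * Rpower ((INR n + INR m) / (INR n + INR m * x)) ((INR m + INR n) / 2).

(* Write f for the density and B for the bound. A direct computation gives
   x f(x) = f(1) B(x) and B'(x) = B(x) e(x) / x, where the elasticity
   e(x) = mn(1 - x) / (2(n + mx)) is decreasing, positive on (0,1) and negative
   on (1,oo); this gives the monotonicity of B. For the tails, let P be a
   primitive of f, so that (B + P)' = (B / x)(e + f(1)) and
   (B - P)' = (B / x)(e - f(1)). As e is monotone, for x >= 1 either B + P is
   nondecreasing on [1,x], whence B(x) + int_1^x f >= B(1) = 1 >= int_1^oo f,
   or it is nonincreasing on [x,oo), whence int_x^y f <= B(x) - B(y) < B(x) for
   all y >= x; the lower tail is symmetric, with B - P.
   The argument needs int f = 1, i.e. the beta integral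
   int_0^oo x^(a-1) / (1 + r x)^(a+b) = Gamma a Gamma b / (Gamma (a+b) r^a)
   at half-integers a, b. It follows by integration by parts from four base
   cases, the one at a = b = 1/2 using Gamma(1/2)^2 = pi, which comes from the
   Gaussian integral through the identity
   (int_0^x e^(-u^2) du)^2 + int_0^1 e^(-x^2 (1 + t^2)) / (1 + t^2) dt = pi / 4. *)

From Stdlib Require Import Reals Lra.
From Coquelicot Require Import Coquelicot.
Open Scope R_scope.

(** * Limits and improper integrals on the positive half-line *)

Lemma ex_derive_continuous_R (f : R -> R) x : ex_derive f x -> continuous f x.
Proof. apply (ex_derive_continuous (K := R_AbsRing) (V := R_NormedModule)). Qed.

Lemma ex_RInt_continuous_R (f : R -> R) a b :
  (forall z, Rmin a b <= z <= Rmax a b -> continuous f z) -> ex_RInt f a b.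
Proof. apply (ex_RInt_continuous (V := R_CompleteNormedModule)). Qed.

Lemma Rpower_pos x y : 0 < Rpower x y.
Proof. apply exp_pos. Qed.

Lemma Rpower_plus_1 y c : 0 < y -> Rpower y (c + 1) = Rpower y c * y.
Proof. intros Hy. rewrite Rpower_plus, Rpower_1; auto. Qed.

Lemma exp_le_mono x y : x <= y -> exp x <= exp y.
Proof. intros [H|H]; [left; apply exp_increasing; auto | subst; lra]. Qed.

Lemma Rpower_ge_1 y c : 1 <= y -> 0 <= c -> 1 <= Rpower y c.
Proof.
  intros Hy Hc. unfold Rpower. rewrite <- exp_0. apply exp_le_mono.
  apply Rmult_le_pos; auto. rewrite <- ln_1. apply ln_le; lra.
Qed.

Lemma at_right_0_pos : at_right 0 (fun a => 0 < a).
Proof. exists (mkposreal 1 Rlt_0_1). intros; auto. Qed.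

Lemma p_infty_pos : Rbar_locally p_infty (fun b => 0 < b).
Proof. exists 0. intros; auto. Qed.

Lemma filterlim_at_point (g : R -> R) x : filterlim g (at_point x) (locally (g x)).
Proof. intros P HP. unfold filtermap, at_point. apply locally_singleton. exact HP. Qed.

Lemma filterlim_at_right_continuous (f : R -> R) x :
  continuous f x -> filterlim f (at_right x) (locally (f x)).
Proof. intros Hc P HP. destruct (Hc P HP) as [d Hd]. exists d. intros y Hy _. now apply Hd. Qed.

Lemma filterlim_squeeze_0 {T} (F : (T -> Prop) -> Prop) {FF : Filter F} (f g : T -> R) :
  F (fun t => Rabs (f t) <= g t) -> filterlim g F (locally 0) -> filterlim f F (locally 0).
Proof.
  intros Hb Hg. apply (filterlim_locally (U := R_UniformSpace)). intros eps.
  apply (filterlim_locally (U := R_UniformSpace)) with (eps := eps) in Hg.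
  generalize (filter_and _ _ Hb Hg). apply filter_imp. intros t [H1 H2].
  change (Rabs (f t - 0) < eps). change (Rabs (g t - 0) < eps) in H2.
  rewrite Rminus_0_r in *. apply Rle_lt_trans with (Rabs (g t)); auto.
  eapply Rle_trans; [exact H1 | apply Rle_abs].
Qed.

Lemma filterlim_scal_0 {T} (F : (T -> Prop) -> Prop) {FF : Filter F} (f : T -> R) k :
  filterlim f F (locally 0) -> filterlim (fun x => k * f x) F (locally 0).
Proof.
  intros H. assert (Hc : continuous (fun u => k * u) 0).
  { apply ex_derive_continuous_R. auto_derive. auto. }
  unfold continuous in Hc. rewrite Rmult_0_r in Hc.
  exact (filterlim_comp _ _ _ f (fun u => k * u) _ _ _ H Hc).
Qed.

Lemma ex_filterlim_cauchy_R {T} (F : (T -> Prop) -> Prop) {FF : ProperFilter F} (g : T -> R) :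
  (forall eps : posreal, exists Q, F Q /\ forall u v, Q u -> Q v -> Rabs (g v - g u) < eps) ->
  exists l, filterlim g F (locally l).
Proof.
  intros HF. apply (filterlim_locally_cauchy (U := R_CompleteSpace)). intros eps.
  destruct (HF eps) as [Q [HQ HQuv]]. exists Q. split; auto.
Qed.

Lemma filterlim_Rpower_at_right_0 s :
  0 < s -> filterlim (fun t => Rpower t s) (at_right 0) (locally 0).
Proof.
  intros Hs. apply (filterlim_locally (U := R_UniformSpace)). intros eps.
  assert (Hd : 0 < exp (ln eps / s)) by apply exp_pos.
  exists (mkposreal _ Hd). intros y Hy Hy0.
  change (Rabs (y - 0) < exp (ln eps / s)) in Hy.
  change (Rabs (Rpower y s - 0) < eps). rewrite Rminus_0_r in *.
  rewrite Rabs_pos_eq in Hy by lra. rewrite Rabs_pos_eq by (left; apply Rpower_pos).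
  unfold Rpower. rewrite <- (exp_ln eps) by apply cond_pos. apply exp_increasing.
  apply ln_increasing in Hy; auto. rewrite ln_exp in Hy.
  apply Rmult_lt_compat_l with (r := s) in Hy; auto.
  replace (s * (ln eps / s)) with (ln eps) in Hy by (field; lra). lra.
Qed.

Lemma filterlim_Rpower_p_infty s :
  0 < s -> filterlim (fun t => Rpower t (- s)) (Rbar_locally p_infty) (locally 0).
Proof.
  intros Hs. apply (filterlim_locally (U := R_UniformSpace)). intros eps.
  exists (exp (- ln eps / s)). intros y Hy.
  assert (Hy0 : 0 < y) by (assert (H := exp_pos (- ln eps / s)); lra).
  change (Rabs (Rpower y (- s) - 0) < eps). rewrite Rminus_0_r.
  rewrite Rabs_pos_eq by (left; apply Rpower_pos).
  unfold Rpower. rewrite <- (exp_ln eps) by apply cond_pos. apply exp_increasing.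
  apply ln_increasing in Hy; [|apply exp_pos]. rewrite ln_exp in Hy.
  apply Rmult_lt_compat_l with (r := s) in Hy; auto.
  replace (s * (- ln eps / s)) with (- ln eps) in Hy by (field; lra). lra.
Qed.

Lemma pow_div_fact_le_exp (t : R) (N : nat) :
  0 <= t -> t ^ N / INR (Factorial.fact N) <= exp t.
Proof.
  intros Ht. eapply Rle_trans; [|apply (exp_ge_taylor t N Ht)].
  destruct N as [|N]; [simpl; lra|].
  simpl sum_f_R0. rewrite <- (Rplus_0_l (t ^ S N / INR (Factorial.fact (S N)))) at 1.
  apply Rplus_le_compat_r. apply cond_pos_sum. intros k.
  apply Rmult_le_pos; [apply pow_le; auto | left; apply Rinv_0_lt_compat, INR_fact_lt_0].
Qed.

(* [t^s e^{-t} <= (K+1)! / t] as soon as [s <= K] and [t >= 1]. *)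
Lemma filterlim_Rpower_exp_p_infty s :
  filterlim (fun t => Rpower t s * exp (- t)) (Rbar_locally p_infty) (locally 0).
Proof.
  destruct (INR_unbounded s) as [K HK].
  set (c := INR (Factorial.fact (S K))).
  assert (Hc : 0 < c) by apply INR_fact_lt_0.
  apply (filterlim_squeeze_0 _ _ (fun t => c * Rpower t (Ropp 1))).
  - exists 1. intros t Ht.
    rewrite Rabs_pos_eq by (apply Rmult_le_pos; left; [apply Rpower_pos | apply exp_pos]).
    assert (H1 : Rpower t s <= t ^ K).
    { rewrite <- Rpower_pow by lra. apply Rle_Rpower; lra. }
    assert (H2 := pow_div_fact_le_exp t (S K) ltac:(lra)). fold c in H2. simpl pow in H2.
    assert (HtK : 0 < t ^ K) by (apply pow_lt; lra).
    assert (He : 0 < exp t) by apply exp_pos.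
    rewrite exp_Ropp, Rpower_Ropp, Rpower_1 by lra.
    apply Rle_trans with (t ^ K / exp t).
    + apply Rmult_le_compat_r; [left; apply Rinv_0_lt_compat |]; auto.
    + apply Rmult_le_reg_r with (exp t * t); [nra|].
      replace (t ^ K / exp t * (exp t * t)) with (t * t ^ K) by (field; lra).
      replace (c * / t * (exp t * t)) with (c * exp t) by (field; lra).
      apply Rmult_le_reg_r with (/ c); [apply Rinv_0_lt_compat; auto|].
      replace (c * exp t * / c) with (exp t) by (field; lra). exact H2.
  - apply filterlim_scal_0; [typeclasses eauto|]. apply filterlim_Rpower_p_infty; lra.
Qed.

Lemma is_RInt_gen_value {Fa Fb} (f : R -> R) (l l' : R) :
  l = l' -> is_RInt_gen f Fa Fb l -> is_RInt_gen f Fa Fb l'.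
Proof. now intros <-. Qed.

Section PositiveHalfLine.

Context (Fa Fb : (R -> Prop) -> Prop) {FFa : Filter Fa} {FFb : Filter Fb}.
Hypothesis Fa_pos : Fa (fun a => 0 < a).
Hypothesis Fb_pos : Fb (fun b => 0 < b).

Lemma filter_prod_pos (P : R -> Prop) : (forall x, 0 < x -> P x) ->
  filter_prod Fa Fb (fun ab => forall x, Rmin (fst ab) (snd ab) <= x <= Rmax (fst ab) (snd ab) -> P x).
Proof.
  intros HP. apply Filter_prod with (fun a => 0 < a) (fun b => 0 < b); auto.
  intros a b Ha Hb x [Hx _]. apply HP. eapply Rlt_le_trans; [|exact Hx].
  now apply Rmin_glb_lt.
Qed.

Lemma is_RInt_gen_ext_pos (f g : R -> R) l :
  (forall x, 0 < x -> f x = g x) -> is_RInt_gen f Fa Fb l -> is_RInt_gen g Fa Fb l.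
Proof.
  intros He. apply is_RInt_gen_ext. generalize (filter_prod_pos _ He).
  apply filter_imp. intros ab H x Hx. apply H. lra.
Qed.

Lemma is_RInt_gen_antiderivative (F g : R -> R) (la lb : R) :
  (forall x, 0 < x -> is_derive F x (g x)) ->
  (forall x, 0 < x -> continuous g x) ->
  filterlim F Fa (locally la) -> filterlim F Fb (locally lb) ->
  is_RInt_gen g Fa Fb (lb - la).
Proof.
  intros Hd Hc Hla Hlb.
  assert (HD : forall x, 0 < x -> Derive F x = g x).
  { intros x Hx. apply is_derive_unique. now apply Hd. }
  apply is_RInt_gen_ext_pos with (Derive F); [exact HD|].
  apply is_RInt_gen_Derive; auto.
  - apply filter_prod_pos. intros x Hx. exists (g x). now apply Hd.
  - apply filter_prod_pos. intros x Hx. apply continuous_ext_loc with g; [|now apply Hc].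
    assert (Hp : 0 < x / 2) by lra.
    exists (mkposreal _ Hp). intros y Hy. symmetry. apply HD.
    change (Rabs (y - x) < x / 2) in Hy. apply Rabs_lt_between' in Hy. lra.
Qed.

End PositiveHalfLine.

Lemma nondecreasing_of_derive (D dD : R -> R) u v : u <= v ->
  (forall y, u <= y <= v -> is_derive D y (dD y)) ->
  (forall y, u <= y <= v -> 0 <= dD y) -> D u <= D v.
Proof.
  intros Huv Hd Hs. destruct (Req_dec u v) as [->|Hne]; [lra|].
  destruct (MVT_gen D u v dD) as [c [Hc Heq]].
  - intros y Hy. rewrite Rmin_left, Rmax_right in Hy by lra. apply Hd; lra.
  - intros y Hy. rewrite Rmin_left, Rmax_right in Hy by lra.
    apply continuity_pt_filterlim, ex_derive_continuous_R. eexists. apply Hd; lra.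
  - rewrite Rmin_left, Rmax_right in Hc by lra.
    assert (0 <= dD c * (v - u)) by (apply Rmult_le_pos; [apply Hs; lra | lra]). lra.
Qed.

Lemma nonincreasing_of_derive (D dD : R -> R) u v : u <= v ->
  (forall y, u <= y <= v -> is_derive D y (dD y)) ->
  (forall y, u <= y <= v -> dD y <= 0) -> D v <= D u.
Proof.
  intros Huv Hd Hs.
  enough (- D u <= - D v) by lra.
  apply (nondecreasing_of_derive (fun y => - D y) (fun y => - dD y)); auto.
  - intros y Hy. apply (is_derive_opp D). now apply Hd.
  - intros y Hy. specialize (Hs y Hy). lra.
Qed.

Section ImproperPrimitive.

Variable f : R -> R.
Hypothesis f_cont : forall x, 0 < x -> continuous f x.

Lemma ex_RInt_pos a b : 0 < a -> 0 < b -> ex_RInt f a b.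
Proof.
  intros Ha Hb. apply ex_RInt_continuous_R. intros z Hz. apply f_cont.
  eapply Rlt_le_trans; [|apply Hz]. now apply Rmin_glb_lt.
Qed.

Lemma is_derive_primitive y : 0 < y -> is_derive (fun y => RInt f 1 y) y (f y).
Proof.
  intros Hy. apply is_derive_RInt with 1; [|now apply f_cont].
  assert (Hp : 0 < y / 2) by lra. exists (mkposreal _ Hp). intros z Hz.
  change (Rabs (z - y) < y / 2) in Hz. apply Rabs_lt_between' in Hz.
  apply RInt_correct, ex_RInt_pos; lra.
Qed.

Lemma RInt_gen_primitive Fa Fb {FFa : ProperFilter Fa} {FFb : ProperFilter Fb} la lb :
  Fa (fun a => 0 < a) -> Fb (fun b => 0 < b) ->
  filterlim (fun y => RInt f 1 y) Fa (locally la) ->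
  filterlim (fun y => RInt f 1 y) Fb (locally lb) ->
  RInt_gen f Fa Fb = lb - la.
Proof.
  intros Ha Hb Hla Hlb. apply is_RInt_gen_unique.
  apply (is_RInt_gen_antiderivative Fa Fb Ha Hb (fun y => RInt f 1 y)); auto.
  apply is_derive_primitive.
Qed.

Variable L : R.
Hypothesis f_int : is_RInt_gen f (at_right 0) (Rbar_locally p_infty) L.

Lemma primitive_near_integral (eps : posreal) :
  exists Q1 Q2, at_right 0 Q1 /\ Rbar_locally p_infty Q2 /\
  forall a b, Q1 a -> Q2 b -> 0 < a -> 0 < b -> Rabs (RInt f 1 b - RInt f 1 a - L) < eps.
Proof.
  destruct (f_int (fun y => Rabs (y - L) < eps)) as [Q1 Q2 HQ1 HQ2 HQ].
  { exists eps. intros y Hy. exact Hy. }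
  exists Q1, Q2. repeat split; auto. intros a b Ha Hb Ha0 Hb0.
  destruct (HQ a b Ha Hb) as [y [Hy1 Hy2]]. simpl in Hy1.
  replace (RInt f 1 b - RInt f 1 a) with y; [exact Hy2|].
  rewrite <- (is_RInt_unique _ _ _ _ Hy1).
  rewrite <- (RInt_Chasles f 1 a b) by (apply ex_RInt_pos; lra).
  unfold plus; simpl. lra.
Qed.

Lemma primitive_limits : exists l0 l1,
  filterlim (fun y => RInt f 1 y) (at_right 0) (locally l0) /\
  filterlim (fun y => RInt f 1 y) (Rbar_locally p_infty) (locally l1) /\ l1 - l0 = L.
Proof.
  assert (Hhalf : forall eps : posreal, 0 < eps / 2) by (intros [eps Heps]; simpl; lra).
  destruct (ex_filterlim_cauchy_R (at_right 0) (fun y => RInt f 1 y)) as [l0 Hl0].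
  { intros eps. destruct (primitive_near_integral (mkposreal _ (Hhalf eps))) as (Q1 & Q2 & H1 & H2 & H3).
    destruct (filter_ex _ (filter_and _ _ H2 p_infty_pos)) as [b [Hb Hb']].
    exists (fun a => Q1 a /\ 0 < a). split; [now apply filter_and, at_right_0_pos|].
    intros u v [Hu Hu'] [Hv Hv'].
    assert (A1 := H3 u b Hu Hb Hu' Hb'). assert (A2 := H3 v b Hv Hb Hv' Hb'). simpl in A1, A2.
    apply Rabs_lt_between' in A1. apply Rabs_lt_between' in A2. apply Rabs_lt_between'. lra. }
  destruct (ex_filterlim_cauchy_R (Rbar_locally p_infty) (fun y => RInt f 1 y)) as [l1 Hl1].
  { intros eps. destruct (primitive_near_integral (mkposreal _ (Hhalf eps))) as (Q1 & Q2 & H1 & H2 & H3).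
    destruct (filter_ex _ (filter_and _ _ H1 at_right_0_pos)) as [a [Ha Ha']].
    exists (fun b => Q2 b /\ 0 < b). split; [now apply filter_and, p_infty_pos|].
    intros u v [Hu Hu'] [Hv Hv'].
    assert (A1 := H3 a u Ha Hu Ha' Hu'). assert (A2 := H3 a v Ha Hv Ha' Hv'). simpl in A1, A2.
    apply Rabs_lt_between' in A1. apply Rabs_lt_between' in A2. apply Rabs_lt_between'. lra. }
  exists l0, l1. repeat split; auto.
  rewrite <- (RInt_gen_primitive _ _ _ _ at_right_0_pos p_infty_pos Hl0 Hl1).
  exact (is_RInt_gen_unique _ _ f_int).
Qed.

End ImproperPrimitive.

(** * Tail bounds for a density proportional to B(x) / x *)

Section TailBound.

Variables f B e : R -> R.
Hypothesis f_cont : forall x, 0 < x -> continuous f x.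
Hypothesis f_pos : forall x, 0 < x -> 0 < f x.
Hypothesis f_mass : is_RInt_gen f (at_right 0) (Rbar_locally p_infty) 1.
Hypothesis B_pos : forall x, 0 < x -> 0 < B x.
Hypothesis B_1 : B 1 = 1.
Hypothesis B_derive : forall x, 0 < x -> is_derive B x (B x * e x / x).
Hypothesis e_nonincreasing : forall x y, 0 < x -> x <= y -> e y <= e x.
Hypothesis f_B : forall x, 0 < x -> f x * x = B x * f 1.

Let P y := RInt f 1 y.

Lemma primitive_nonneg y : 1 <= y -> 0 <= P y.
Proof.
  intros Hy. apply RInt_ge_0; [lra | apply ex_RInt_pos; auto; lra |].
  intros z Hz. left. apply f_pos. lra.
Qed.

Lemma primitive_nonpos y : 0 < y <= 1 -> P y <= 0.
Proof.
  intros Hy. unfold P. rewrite <- opp_RInt_swap by (apply ex_RInt_pos; auto; lra).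
  enough (0 <= RInt f y 1) by (unfold opp; simpl; lra).
  apply RInt_ge_0; [lra | apply ex_RInt_pos; auto; lra |].
  intros z Hz. left. apply f_pos. lra.
Qed.

Lemma primitive_1 : P 1 = 0.
Proof. unfold P. now rewrite RInt_point. Qed.

Lemma primitive_limits_mass : exists l0 l1,
  filterlim P (at_right 0) (locally l0) /\ filterlim P (Rbar_locally p_infty) (locally l1) /\
  l1 - l0 = 1 /\ l0 <= 0 /\ 0 <= l1.
Proof.
  destruct (primitive_limits f f_cont 1 f_mass) as (l0 & l1 & H0 & H1 & Hd).
  exists l0, l1. repeat split; auto.
  - apply (filterlim_le (F := at_right 0) P (fun _ => 0) l0 0); auto; [|apply filterlim_const].
    exists (mkposreal 1 Rlt_0_1). intros y Hy Hy0. apply primitive_nonpos.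
    change (Rabs (y - 0) < 1) in Hy. rewrite Rminus_0_r, Rabs_pos_eq in Hy; lra.
  - apply (filterlim_le (F := Rbar_locally p_infty) (fun _ => 0) P 0 l1); auto; [|apply filterlim_const].
    exists 1. intros y Hy. apply primitive_nonneg. lra.
Qed.

Lemma B_div_pos x : 0 < x -> 0 < B x / x.
Proof. intros Hx. apply Rdiv_lt_0_compat; auto. Qed.

Lemma f_eq_B x : 0 < x -> f x = B x / x * f 1.
Proof. intros Hx. apply (Rmult_eq_reg_r x); [|lra]. rewrite f_B by auto. field. lra. Qed.

Lemma is_derive_B_plus_primitive x : 0 < x ->
  is_derive (fun y => B y + P y) x (B x / x * (e x + f 1)).
Proof.
  intros Hx. replace (B x / x * (e x + f 1)) with (plus (B x * e x / x) (f x)).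
  - apply (is_derive_plus B P); auto. now apply is_derive_primitive.
  - rewrite f_eq_B by auto. unfold plus; simpl. field. lra.
Qed.

Lemma is_derive_B_minus_primitive x : 0 < x ->
  is_derive (fun y => B y - P y) x (B x / x * (e x - f 1)).
Proof.
  intros Hx. replace (B x / x * (e x - f 1)) with (minus (B x * e x / x) (f x)).
  - apply (is_derive_minus B P); auto. now apply is_derive_primitive.
  - rewrite f_eq_B by auto. unfold minus, plus, opp; simpl. field. lra.
Qed.

Lemma upper_tail_le_B x : 1 <= x -> RInt_gen f (at_point x) (Rbar_locally p_infty) <= B x.
Proof.
  intros Hx. destruct primitive_limits_mass as (l0 & l1 & H0 & H1 & Hd & Hl0 & Hl1).
  rewrite (RInt_gen_primitive f f_cont _ _ (P x) l1); auto;
    [| unfold at_point; lra | apply p_infty_pos | apply filterlim_at_point].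
  destruct (Rle_or_lt (- f 1) (e x)) as [He | He].
  - enough (B 1 + P 1 <= B x + P x) by (rewrite B_1, primitive_1 in *; lra).
    apply (nondecreasing_of_derive (fun y => B y + P y) (fun y => B y / y * (e y + f 1)) 1 x Hx).
    + intros y Hy. apply is_derive_B_plus_primitive. lra.
    + intros y Hy. apply Rmult_le_pos; [apply Rlt_le, B_div_pos; lra|].
      assert (e x <= e y) by (apply e_nonincreasing; lra). lra.
  - enough (l1 <= B x + P x) by lra.
    apply (filterlim_le (F := Rbar_locally p_infty) P (fun _ => B x + P x) l1 (B x + P x)); auto;
      [|apply filterlim_const].
    exists x. intros y Hy.
    enough (B y + P y <= B x + P x) by (assert (0 < B y) by (apply B_pos; lra); lra).
    apply (nonincreasing_of_derive (fun y => B y + P y) (fun y => B y / y * (e y + f 1)) x y); [lra| |].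
    + intros z Hz. apply is_derive_B_plus_primitive. lra.
    + intros z Hz. assert (e z <= e x) by (apply e_nonincreasing; lra).
      assert (0 < B z / z) by (apply B_div_pos; lra). nra.
Qed.

Lemma cdf_le_B x : 0 < x <= 1 -> RInt_gen f (at_right 0) (at_point x) <= B x.
Proof.
  intros Hx. destruct primitive_limits_mass as (l0 & l1 & H0 & H1 & Hd & Hl0 & Hl1).
  rewrite (RInt_gen_primitive f f_cont _ _ l0 (P x)); auto;
    [| apply at_right_0_pos | unfold at_point; lra | apply filterlim_at_point].
  destruct (Rle_or_lt (e x) (f 1)) as [He | He].
  - enough (B 1 - P 1 <= B x - P x) by (rewrite B_1, primitive_1 in *; lra).
    apply (nonincreasing_of_derive (fun y => B y - P y) (fun y => B y / y * (e y - f 1)) x 1); [lra| |].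
    + intros y Hy. apply is_derive_B_minus_primitive. lra.
    + intros y Hy. assert (e y <= e x) by (apply e_nonincreasing; lra).
      assert (0 < B y / y) by (apply B_div_pos; lra). nra.
  - enough (P x - B x <= l0) by lra.
    apply (filterlim_le (F := at_right 0) (fun _ => P x - B x) P (P x - B x) l0); auto;
      [|apply filterlim_const].
    exists (mkposreal x (proj1 Hx)). intros y Hy Hy0.
    change (Rabs (y - 0) < x) in Hy. rewrite Rminus_0_r, Rabs_pos_eq in Hy by lra.
    enough (B y - P y <= B x - P x) by (assert (0 < B y) by (apply B_pos; lra); lra).
    apply (nondecreasing_of_derive (fun y => B y - P y) (fun y => B y / y * (e y - f 1)) y x); [lra| |].
    + intros z Hz. apply is_derive_B_minus_primitive. lra.
    + intros z Hz. assert (e x <= e z) by (apply e_nonincreasing; lra).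
      assert (0 < B z / z) by (apply B_div_pos; lra). nra.
Qed.

End TailBound.

(** * The Gamma function at half-integers *)

Definition Gamma_integrand (s t : R) := Rpower t (s - 1) * exp (- t).

Lemma Gamma_integrand_continuous s t : 0 < t -> continuous (Gamma_integrand s) t.
Proof. intros Ht. apply ex_derive_continuous_R. unfold Gamma_integrand, Rpower. auto_derive. lra. Qed.

Lemma Gamma_of_is_RInt_gen s g :
  is_RInt_gen (Gamma_integrand s) (at_right 0) (Rbar_locally p_infty) g -> Gamma s = g.
Proof. apply (is_RInt_gen_unique (V := R_CompleteNormedModule)). Qed.

(* Integration by parts, with [- t^s e^{-t}] as the boundary term. *)
Lemma is_RInt_gen_Gamma_succ s l : 0 < s ->
  is_RInt_gen (Gamma_integrand s) (at_right 0) (Rbar_locally p_infty) l ->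
  is_RInt_gen (Gamma_integrand (s + 1)) (at_right 0) (Rbar_locally p_infty) (s * l).
Proof.
  intros Hs Hl.
  assert (Hpos : forall t, 0 <= Rpower t s * exp (- t))
    by (intros t; apply Rmult_le_pos; left; [apply Rpower_pos | apply exp_pos]).
  assert (H1 : is_RInt_gen (fun t => Gamma_integrand (s + 1) t - s * Gamma_integrand s t)
                 (at_right 0) (Rbar_locally p_infty) (0 - 0)).
  { apply (is_RInt_gen_antiderivative _ _ at_right_0_pos p_infty_pos
             (fun t => - (Rpower t s * exp (- t)))).
    - intros t Ht. unfold Gamma_integrand, Rpower. auto_derive; [lra|].
      replace (s + 1 - 1) with s by ring.
      replace ((s - 1) * ln t) with (s * ln t + - ln t) by ring.
      rewrite exp_plus, (exp_Ropp (ln t)), exp_ln by lra. field. lra.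
    - intros t Ht. apply ex_derive_continuous_R. unfold Gamma_integrand, Rpower. auto_derive. lra.
    - apply (filterlim_squeeze_0 _ _ (fun t => Rpower t s)).
      + exists (mkposreal 1 Rlt_0_1). intros t _ Ht.
        rewrite Rabs_Ropp, Rabs_pos_eq by apply Hpos.
        rewrite <- Rmult_1_r. apply Rmult_le_compat_l; [left; apply Rpower_pos|].
        rewrite <- exp_0. apply exp_le_mono. lra.
      + now apply filterlim_Rpower_at_right_0.
    - apply (filterlim_squeeze_0 _ _ (fun t => Rpower t s * exp (- t))).
      + apply filter_forall. intros t. rewrite Rabs_Ropp, Rabs_pos_eq by apply Hpos. lra.
      + apply filterlim_Rpower_exp_p_infty. }
  apply (is_RInt_gen_value _ (plus (0 - 0) (scal s l))).
  { unfold plus, scal; simpl; unfold mult; simpl. ring. }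
  eapply is_RInt_gen_ext; [| exact (is_RInt_gen_plus _ _ _ _ H1 (is_RInt_gen_scal _ s _ Hl))].
  apply filter_forall. intros ab x _. unfold plus, scal; simpl; unfold mult; simpl. ring.
Qed.

Lemma is_RInt_gen_Gamma_1 : is_RInt_gen (Gamma_integrand 1) (at_right 0) (Rbar_locally p_infty) 1.
Proof.
  apply (is_RInt_gen_value _ (0 - -1)); [ring|].
  apply (is_RInt_gen_antiderivative _ _ at_right_0_pos p_infty_pos (fun t => - exp (- t))).
  - intros t Ht. unfold Gamma_integrand. replace (1 - 1) with 0 by ring.
    rewrite Rpower_O by lra. auto_derive; auto. ring.
  - intros; now apply Gamma_integrand_continuous.
  - replace (-1) with (- exp (- 0)) by (rewrite Ropp_0, exp_0; ring).
    apply (filterlim_at_right_continuous (fun t => - exp (- t))).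
    apply ex_derive_continuous_R. auto_derive. auto.
  - apply (filterlim_squeeze_0 _ _ (fun t => Rpower t 0 * exp (- t))).
    + exists 0. intros t Ht. rewrite Rpower_O by lra. rewrite Rabs_Ropp, Rabs_pos_eq; [lra|].
      left; apply exp_pos.
    + apply filterlim_Rpower_exp_p_infty.
Qed.

Definition gauss (u : R) := exp (- (u * u)).
Definition gauss_int (x : R) := RInt gauss 0 x.
Definition gauss_kernel (x t : R) := exp (- (x * x) * (1 + t * t)) / (1 + t * t).
Definition gauss_aux (x : R) := RInt (gauss_kernel x) 0 1.

Lemma gauss_pos x : 0 < gauss x.
Proof. apply exp_pos. Qed.

Lemma gauss_continuous x : continuous gauss x.
Proof. apply ex_derive_continuous_R. unfold gauss. auto_derive. auto. Qed.

Lemma ex_RInt_gauss a b : ex_RInt gauss a b.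
Proof. apply ex_RInt_continuous_R. intros; apply gauss_continuous. Qed.

Lemma is_derive_gauss_int (x : R) : is_derive gauss_int x (gauss x).
Proof.
  apply is_derive_RInt with 0; [|apply gauss_continuous].
  apply filter_forall. intros y. apply RInt_correct, ex_RInt_gauss.
Qed.

Lemma gauss_kernel_continuous x t : continuous (gauss_kernel x) t.
Proof. apply ex_derive_continuous_R. unfold gauss_kernel. auto_derive. nra. Qed.

Lemma Derive_gauss_kernel x t :
  Derive (fun u => gauss_kernel u t) x = -2 * x * exp (- (x * x) * (1 + t * t)).
Proof. apply is_derive_unique. unfold gauss_kernel. auto_derive; [nra|]. field. nra. Qed.

(* Differentiating under the integral sign and substituting [u = x t]. *)
Lemma is_derive_gauss_aux (x : R) : is_derive gauss_aux x (-2 * gauss x * gauss_int x).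
Proof.
  assert (Hd : is_derive gauss_aux x (RInt (fun t => Derive (fun u => gauss_kernel u t) x) 0 1)).
  { apply (is_derive_RInt_param gauss_kernel).
    - apply filter_forall. intros y t _. unfold gauss_kernel. auto_derive. nra.
    - intros t _.
      apply continuity_2d_pt_ext with (fun u v => -2 * u * exp (- (u * u) * (1 + v * v))).
      { intros; symmetry; apply Derive_gauss_kernel. }
      apply continuity_2d_pt_mult.
      { apply continuity_2d_pt_mult; [apply continuity_2d_pt_const | apply continuity_2d_pt_id1]. }
      apply continuity_1d_2d_pt_comp with (f := exp).
      { apply derivable_continuous_pt, derivable_pt_exp. }
      apply continuity_2d_pt_mult.
      { apply continuity_2d_pt_opp, continuity_2d_pt_mult; apply continuity_2d_pt_id1. }
      apply continuity_2d_pt_plus; [apply continuity_2d_pt_const|].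
      apply continuity_2d_pt_mult; apply continuity_2d_pt_id2.
    - apply filter_forall. intros y. apply ex_RInt_continuous_R. intros; apply gauss_kernel_continuous. }
  replace (-2 * gauss x * gauss_int x)
    with (RInt (fun t => Derive (fun u => gauss_kernel u t) x) 0 1); [exact Hd|].
  rewrite (RInt_ext _ (fun t => scal (-2 * gauss x) (scal x (gauss (x * t + 0))))).
  2:{ intros t _. rewrite Derive_gauss_kernel. unfold gauss, scal; simpl; unfold mult; simpl.
      replace (- (x * x) * (1 + t * t)) with (- (x * x) + - ((x * t + 0) * (x * t + 0))) by ring.
      rewrite exp_plus. ring. }
  rewrite (RInt_scal (V := R_CompleteNormedModule) (fun t => scal x (gauss (x * t + 0)))).
  - rewrite (RInt_comp_lin (V := R_CompleteNormedModule) gauss) by apply ex_RInt_gauss.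
    unfold gauss_int. replace (x * 0 + 0) with 0 by ring.
    replace (x * 1 + 0) with x by ring. reflexivity.
  - apply ex_RInt_continuous_R. intros. apply ex_derive_continuous_R.
    unfold gauss, scal; simpl; unfold mult; simpl. auto_derive. auto.
Qed.

Lemma gauss_aux_0 : gauss_aux 0 = PI / 4.
Proof.
  unfold gauss_aux. rewrite <- atan_1. rewrite (RInt_ext _ (fun t => / (1 + t ^ 2))).
  2:{ intros t _. change (gauss_kernel 0 t = / (1 + t ^ 2)). unfold gauss_kernel.
      replace (- (0 * 0) * (1 + t * t)) with 0 by ring.
      rewrite exp_0. field. nra. }
  rewrite (is_RInt_unique _ 0 1 (atan 1 - atan 0)).
  { rewrite atan_0. unfold minus, plus, opp; simpl. ring. }
  apply (is_RInt_derive (V := R_CompleteNormedModule) atan).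
  - intros x _. apply is_derive_Reals. apply derivable_pt_lim_atan.
  - intros x _. apply ex_derive_continuous_R. auto_derive. nra.
Qed.

Lemma gauss_int_sq_plus_aux x : 0 <= x -> gauss_int x ^ 2 + gauss_aux x = PI / 4.
Proof.
  intros Hx. rewrite <- gauss_aux_0.
  replace (gauss_aux 0) with (gauss_int 0 ^ 2 + gauss_aux 0)
    by (unfold gauss_int; rewrite RInt_point; unfold zero; simpl; ring).
  destruct (Req_dec x 0) as [->|Hx0]; [reflexivity|].
  symmetry. apply (eq_is_derive (V := R_NormedModule) (fun x => gauss_int x ^ 2 + gauss_aux x) 0 x); [|lra].
  intros t _. change (@zero R_NormedModule) with 0.
  replace 0 with (2 * gauss_int t * gauss t + (-2 * gauss t * gauss_int t)) by ring.
  apply (is_derive_plus (fun x => gauss_int x ^ 2) gauss_aux); [|apply is_derive_gauss_aux].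
  apply (is_derive_ext (fun x => gauss_int x * gauss_int x)); [intros; simpl; ring|].
  replace (2 * gauss_int t * gauss t) with (gauss t * gauss_int t + gauss_int t * gauss t) by ring.
  apply (is_derive_mult gauss_int gauss_int); try apply is_derive_gauss_int. intros; apply Rmult_comm.
Qed.

Lemma gauss_int_nonneg x : 0 <= x -> 0 <= gauss_int x.
Proof.
  intros Hx. apply RInt_ge_0; auto; [apply ex_RInt_gauss|]. intros; left; apply gauss_pos.
Qed.

Lemma gauss_aux_bounds x : 0 <= gauss_aux x <= gauss x.
Proof.
  assert (Hk : forall t, 0 <= t -> 0 < gauss_kernel x t <= gauss x).
  { intros t Ht. unfold gauss_kernel, gauss. split.
    - apply Rdiv_lt_0_compat; [apply exp_pos | nra].
    - assert (H1 : exp (- (x * x) * (1 + t * t)) <= exp (- (x * x)))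
        by (apply exp_le_mono; assert (0 <= x * x * (t * t)) by (apply Rmult_le_pos; nra); nra).
      unfold Rdiv. apply Rle_trans with (exp (- (x * x) * (1 + t * t)) * 1); [|lra].
      apply Rmult_le_compat_l; [left; apply exp_pos|].
      rewrite <- Rinv_1. apply Rinv_le_contravar; nra. }
  assert (Hex : ex_RInt (gauss_kernel x) 0 1)
    by (apply ex_RInt_continuous_R; intros; apply gauss_kernel_continuous).
  unfold gauss_aux. split.
  - apply RInt_ge_0; [lra | exact Hex |]. intros t Ht. left; apply Hk; lra.
  - apply Rle_trans with (RInt (fun _ => gauss x) 0 1).
    + apply RInt_le; [lra | exact Hex | apply ex_RInt_const |]. intros t Ht. apply Hk; lra.
    + rewrite RInt_const. unfold scal; simpl; unfold mult; simpl. lra.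
Qed.

Lemma gauss_lt_inv x : 0 < x -> gauss x < / x.
Proof.
  intros Hx. unfold gauss. rewrite exp_Ropp.
  apply Rinv_lt_contravar; [apply Rmult_lt_0_compat; [lra | apply exp_pos]|].
  assert (H := exp_ineq1_le (x * x)). nra.
Qed.

Lemma filterlim_gauss_aux : filterlim gauss_aux (Rbar_locally p_infty) (locally 0).
Proof.
  apply (filterlim_squeeze_0 _ _ (fun x => Rpower x (Ropp 1))).
  - exists 0. intros x Hx. destruct (gauss_aux_bounds x) as [H1 H2].
    rewrite Rabs_pos_eq, Rpower_Ropp, Rpower_1 by lra. assert (H3 := gauss_lt_inv x Hx). lra.
  - apply filterlim_Rpower_p_infty. lra.
Qed.

Lemma filterlim_gauss_int : filterlim gauss_int (Rbar_locally p_infty) (locally (sqrt (PI / 4))).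
Proof.
  apply (filterlim_ext_loc (fun x => sqrt (PI / 4 - gauss_aux x))).
  { exists 0. intros x Hx. rewrite <- (gauss_int_sq_plus_aux x) by lra.
    replace (gauss_int x ^ 2 + gauss_aux x - gauss_aux x) with (Rsqr (gauss_int x)) by (unfold Rsqr; ring).
    apply sqrt_Rsqr, gauss_int_nonneg. lra. }
  apply (filterlim_comp _ _ _ gauss_aux (fun g => sqrt (PI / 4 - g)) _ (locally 0)).
  { apply filterlim_gauss_aux. }
  assert (Hc : continuous (fun g => sqrt (PI / 4 - g)) 0).
  { apply ex_derive_continuous_R. auto_derive. assert (H := PI_RGT_0). lra. }
  unfold continuous in Hc. rewrite Rminus_0_r in Hc. exact Hc.
Qed.

(* Substituting [t = u^2] turns the Gamma integral at [1/2] into twice the Gaussian integral. *)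
Lemma is_RInt_gen_Gamma_half :
  is_RInt_gen (Gamma_integrand (/ 2)) (at_right 0) (Rbar_locally p_infty) (2 * sqrt (PI / 4)).
Proof.
  apply (is_RInt_gen_value _ (2 * sqrt (PI / 4) - 2 * gauss_int (sqrt 0))).
  { rewrite sqrt_0. unfold gauss_int. rewrite RInt_point. unfold zero; simpl. ring. }
  apply (is_RInt_gen_antiderivative _ _ at_right_0_pos p_infty_pos (fun t => 2 * gauss_int (sqrt t))).
  - intros t Ht. assert (Hs := sqrt_lt_R0 t Ht).
    assert (Hsqrt : is_derive sqrt t (/ (2 * sqrt t))) by (auto_derive; [auto | field; lra]).
    assert (H := is_derive_comp gauss_int sqrt t _ _ (is_derive_gauss_int (sqrt t)) Hsqrt).
    apply (is_derive_scal _ _ 2 _) in H.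
    replace (Gamma_integrand (/ 2) t) with (scal 2 (scal (/ (2 * sqrt t)) (gauss (sqrt t)))); [exact H|].
    unfold Gamma_integrand, gauss, scal; simpl; unfold mult; simpl.
    rewrite sqrt_sqrt by lra. replace (/ 2 - 1) with (- / 2) by field.
    rewrite Rpower_Ropp, Rpower_sqrt by auto. field. lra.
  - intros; now apply Gamma_integrand_continuous.
  - apply (filterlim_at_right_continuous (fun t => 2 * gauss_int (sqrt t))).
    apply (continuous_comp sqrt (fun u => 2 * gauss_int u)).
    + apply continuity_pt_filterlim, continuity_pt_sqrt. lra.
    + apply ex_derive_continuous_R, ex_derive_scal. eexists. apply is_derive_gauss_int.
  - apply (filterlim_comp _ _ _ sqrt (fun u => 2 * gauss_int u) _ (Rbar_locally p_infty));
      [apply filterlim_sqrt_p|].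
    apply (filterlim_comp _ _ _ gauss_int (fun u => 2 * u) _ (locally (sqrt (PI / 4))));
      [apply filterlim_gauss_int|].
    apply ex_derive_continuous_R. auto_derive. auto.
Qed.

Lemma Gamma_half_sqr : Gamma (/ 2) * Gamma (/ 2) = PI.
Proof.
  rewrite (Gamma_of_is_RInt_gen _ _ is_RInt_gen_Gamma_half).
  replace (2 * sqrt (PI / 4) * (2 * sqrt (PI / 4))) with (4 * (sqrt (PI / 4) * sqrt (PI / 4))) by ring.
  rewrite sqrt_sqrt; [field|]. assert (H := PI_RGT_0). lra.
Qed.

Definition half_succ (k : nat) := INR (S k) / 2.

Lemma half_succ_pos k : 0 < half_succ k.
Proof. unfold half_succ. assert (H := lt_0_INR (S k) (Nat.lt_0_succ k)). lra. Qed.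

Lemma half_succ_SS k : half_succ (S (S k)) = half_succ k + 1.
Proof. unfold half_succ. rewrite !S_INR. field. Qed.

Lemma half_succ_add i j : half_succ i + half_succ j = half_succ (i + j + 1).
Proof. unfold half_succ. rewrite !S_INR, !plus_INR. simpl. field. Qed.

Lemma half_succ_0 : half_succ 0 = / 2.
Proof. unfold half_succ. simpl. field. Qed.

Lemma half_succ_1 : half_succ 1 = 1.
Proof. unfold half_succ. simpl. field. Qed.

Lemma half_succ_pred k : (0 < k)%nat -> half_succ (pred k) = INR k / 2.
Proof. intros Hk. unfold half_succ. now rewrite Nat.succ_pred_pos. Qed.

Lemma is_RInt_gen_Gamma_half_succ k :
  is_RInt_gen (Gamma_integrand (half_succ k)) (at_right 0) (Rbar_locally p_infty) (Gamma (half_succ k))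
  /\ 0 < Gamma (half_succ k).
Proof.
  enough (exists g, is_RInt_gen (Gamma_integrand (half_succ k)) (at_right 0) (Rbar_locally p_infty) g
                    /\ 0 < g) as (g & Hg & Hg0) by (now rewrite (Gamma_of_is_RInt_gen _ _ Hg)).
  revert k. apply Nat.pair_induction; [now intros ? ? -> | | | ].
  - exists (2 * sqrt (PI / 4)). rewrite half_succ_0. split; [apply is_RInt_gen_Gamma_half|].
    apply Rmult_lt_0_compat; [lra|]. apply sqrt_lt_R0. assert (H := PI_RGT_0). lra.
  - exists 1. rewrite half_succ_1. split; [apply is_RInt_gen_Gamma_1 | lra].
  - intros k (g & Hg & Hg0) _. exists (half_succ k * g). rewrite half_succ_SS. split.
    + apply is_RInt_gen_Gamma_succ; auto. apply half_succ_pos.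
    + apply Rmult_lt_0_compat; auto. apply half_succ_pos.
Qed.

Lemma Gamma_half_succ_pos k : 0 < Gamma (half_succ k).
Proof. apply is_RInt_gen_Gamma_half_succ. Qed.

Lemma Gamma_half_succ_succ k : Gamma (half_succ k + 1) = half_succ k * Gamma (half_succ k).
Proof.
  apply Gamma_of_is_RInt_gen, is_RInt_gen_Gamma_succ; [apply half_succ_pos|].
  apply is_RInt_gen_Gamma_half_succ.
Qed.

(** * Beta integrals *)

Ltac side_conditions :=
  repeat split; try (apply Rgt_not_eq, exp_pos); try (apply Rgt_not_eq; nra);
  try (apply Rgt_not_eq; repeat apply Rmult_lt_0_compat; nra); try lra; try nra.

Lemma filterlim_Rpower_ratio_at_right_0 r a c : 0 < r -> 0 < a -> 0 <= c ->
  filterlim (fun x => Rpower x a / Rpower (1 + r * x) c) (at_right 0) (locally 0).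
Proof.
  intros Hr Ha Hc. apply (filterlim_squeeze_0 _ _ (fun x => Rpower x a)).
  - exists (mkposreal 1 Rlt_0_1). intros x _ Hx.
    assert (H1 := Rpower_ge_1 (1 + r * x) c ltac:(nra) Hc).
    assert (H2 := Rpower_pos x a).
    assert (H3 := Rpower_pos (1 + r * x) c).
    rewrite Rabs_pos_eq by (apply Rlt_le, Rdiv_lt_0_compat; lra).
    apply Rmult_le_reg_r with (Rpower (1 + r * x) c); [lra|].
    unfold Rdiv. rewrite Rmult_assoc, Rinv_l by lra. nra.
  - now apply filterlim_Rpower_at_right_0.
Qed.

(* [x^a / (1 + r x)^c <= r^(-c) x^(a - c)]. *)
Lemma filterlim_Rpower_ratio_p_infty r a c : 0 < r -> 0 <= c -> a < c ->
  filterlim (fun x => Rpower x a / Rpower (1 + r * x) c) (Rbar_locally p_infty) (locally 0).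
Proof.
  intros Hr Hc Hac. apply (filterlim_squeeze_0 _ _ (fun x => Rpower r (- c) * Rpower x (- (c - a)))).
  - exists 0. intros x Hx.
    rewrite Rabs_pos_eq by (apply Rlt_le, Rdiv_lt_0_compat; apply Rpower_pos).
    unfold Rdiv, Rpower. rewrite <- exp_Ropp, <- !exp_plus. apply exp_le_mono.
    assert (H : ln (r * x) <= ln (1 + r * x)) by (apply ln_le; nra).
    rewrite ln_mult in H by lra. nra.
  - apply filterlim_scal_0; [typeclasses eauto|]. apply filterlim_Rpower_p_infty. lra.
Qed.

Definition beta_kernel (r a b x : R) := Rpower x (a - 1) / Rpower (1 + r * x) (a + b).

Definition beta_value (r a b : R) := Gamma a * Gamma b / (Gamma (a + b) * Rpower r a).

(* Integration by parts against the boundary term [x^a / (1 + r x)^(a + b)]. *)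
Lemma is_RInt_gen_beta_succ_l r a b l : 0 < r -> 0 < a -> 0 < b ->
  is_RInt_gen (beta_kernel r a b) (at_right 0) (Rbar_locally p_infty) l ->
  is_RInt_gen (beta_kernel r (a + 1) b) (at_right 0) (Rbar_locally p_infty) (a / ((a + b) * r) * l).
Proof.
  intros Hr Ha Hb Hl.
  assert (H1 : is_RInt_gen (fun x => a * beta_kernel r a b x - (a + b) * r * beta_kernel r (a + 1) b x)
                 (at_right 0) (Rbar_locally p_infty) (0 - 0)).
  { apply (is_RInt_gen_antiderivative _ _ at_right_0_pos p_infty_pos
             (fun x => Rpower x a / Rpower (1 + r * x) (a + b))).
    - intros x Hx. unfold beta_kernel, Rpower. auto_derive; [side_conditions|].
      replace ((a - 1) * ln x) with (a * ln x + - ln x) by ring.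
      replace ((a + 1 + b) * ln (1 + r * x)) with ((a + b) * ln (1 + r * x) + ln (1 + r * x)) by ring.
      replace (a + 1 - 1) with a by ring.
      rewrite !exp_plus, (exp_Ropp (ln x)), !exp_ln by nra.
      assert (0 < exp (a * ln x)) by apply exp_pos.
      assert (0 < exp ((a + b) * ln (1 + r * x))) by apply exp_pos.
      field. nra.
    - intros x Hx. apply ex_derive_continuous_R. unfold beta_kernel, Rpower. auto_derive. side_conditions.
    - apply filterlim_Rpower_ratio_at_right_0; lra.
    - apply filterlim_Rpower_ratio_p_infty; lra. }
  assert (H2 := is_RInt_gen_minus _ _ _ _ (is_RInt_gen_scal _ a _ Hl) H1).
  apply (is_RInt_gen_scal _ (/ ((a + b) * r))) in H2.
  apply (is_RInt_gen_value _ (scal (/ ((a + b) * r)) (minus (scal a l) (0 - 0)))).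
  { unfold minus, plus, opp, scal; simpl; unfold mult; simpl. field. nra. }
  eapply is_RInt_gen_ext; [| exact H2]. apply filter_forall. intros ab x _.
  unfold minus, plus, opp, scal; simpl; unfold mult; simpl. field. nra.
Qed.

Lemma beta_kernel_succ_r r a b x : 0 < x -> 0 < r ->
  beta_kernel r a (b + 1) x = beta_kernel r a b x - r * beta_kernel r (a + 1) b x.
Proof.
  intros Hx Hr. unfold beta_kernel, Rpower.
  replace ((a - 1) * ln x) with (a * ln x + - ln x) by ring.
  replace (a + 1 - 1) with a by ring.
  replace ((a + (b + 1)) * ln (1 + r * x)) with ((a + b) * ln (1 + r * x) + ln (1 + r * x)) by ring.
  replace ((a + 1 + b) * ln (1 + r * x)) with ((a + b) * ln (1 + r * x) + ln (1 + r * x)) by ring.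
  rewrite !exp_plus, (exp_Ropp (ln x)), !exp_ln by nra.
  assert (0 < exp (a * ln x)) by apply exp_pos.
  assert (0 < exp ((a + b) * ln (1 + r * x))) by apply exp_pos.
  field. split; nra.
Qed.

Lemma is_RInt_gen_beta_succ_r r a b l l' : 0 < r ->
  is_RInt_gen (beta_kernel r a b) (at_right 0) (Rbar_locally p_infty) l ->
  is_RInt_gen (beta_kernel r (a + 1) b) (at_right 0) (Rbar_locally p_infty) l' ->
  is_RInt_gen (beta_kernel r a (b + 1)) (at_right 0) (Rbar_locally p_infty) (l - r * l').
Proof.
  intros Hr Hl Hl'.
  apply (is_RInt_gen_ext_pos _ _ at_right_0_pos p_infty_pos
           (fun x => minus (beta_kernel r a b x) (scal r (beta_kernel r (a + 1) b x)))).
  - intros x Hx. now rewrite beta_kernel_succ_r.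
  - exact (is_RInt_gen_minus _ _ _ _ Hl (is_RInt_gen_scal _ r _ Hl')).
Qed.

Lemma is_RInt_gen_beta_1_1 r : 0 < r ->
  is_RInt_gen (beta_kernel r 1 1) (at_right 0) (Rbar_locally p_infty) (/ r).
Proof.
  intros Hr.
  apply (is_RInt_gen_ext_pos _ _ at_right_0_pos p_infty_pos (fun x => / ((1 + r * x) * (1 + r * x)))).
  { intros x Hx. unfold beta_kernel. replace (1 - 1) with 0 by ring. rewrite Rpower_O by auto.
    rewrite Rpower_plus_1, Rpower_1 by nra. field. nra. }
  apply (is_RInt_gen_value _ (0 - - / (r * (1 + r * 0)))); [field; lra|].
  apply (is_RInt_gen_antiderivative _ _ at_right_0_pos p_infty_pos (fun x => - / (r * (1 + r * x)))).
  - intros x Hx. auto_derive; [side_conditions|]. field. nra.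
  - intros x Hx. apply ex_derive_continuous_R. auto_derive. side_conditions.
  - apply (filterlim_at_right_continuous (fun x => - / (r * (1 + r * x)))).
    apply ex_derive_continuous_R. auto_derive. side_conditions.
  - apply (filterlim_squeeze_0 _ _ (fun x => / r * (Rpower x 0 / Rpower (1 + r * x) 1))).
    + exists 0. intros x Hx. rewrite Rpower_O, Rpower_1 by nra.
      rewrite Rabs_Ropp, Rabs_pos_eq by (left; apply Rinv_0_lt_compat; nra).
      right. field. nra.
    + apply filterlim_scal_0; [typeclasses eauto|]. apply filterlim_Rpower_ratio_p_infty; lra.
Qed.

Lemma is_RInt_gen_beta_1_half r : 0 < r ->
  is_RInt_gen (beta_kernel r 1 (/ 2)) (at_right 0) (Rbar_locally p_infty) (2 / r).
Proof.
  intros Hr.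
  apply (is_RInt_gen_ext_pos _ _ at_right_0_pos p_infty_pos
           (fun x => / ((1 + r * x) * sqrt (1 + r * x)))).
  { intros x Hx. unfold beta_kernel. replace (1 - 1) with 0 by ring. rewrite Rpower_O by auto.
    replace (1 + / 2) with (/ 2 + 1) by ring.
    assert (Hs := sqrt_lt_R0 (1 + r * x) ltac:(nra)).
    rewrite Rpower_plus_1, Rpower_sqrt by nra. field. split; nra. }
  apply (is_RInt_gen_value _ (0 - - (2 / (r * sqrt (1 + r * 0))))).
  { rewrite Rmult_0_r, Rplus_0_r, sqrt_1. field. lra. }
  apply (is_RInt_gen_antiderivative _ _ at_right_0_pos p_infty_pos
           (fun x => - (2 / (r * sqrt (1 + r * x))))).
  - intros x Hx. assert (Hs := sqrt_lt_R0 (1 + r * x) ltac:(nra)).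
    auto_derive; [side_conditions|].
    assert (Hv := sqrt_sqrt (1 + r * x) ltac:(nra)).
    set (v := sqrt (1 + r * x)) in *. rewrite <- Hv. field. lra.
  - intros x Hx. assert (Hs := sqrt_lt_R0 (1 + r * x) ltac:(nra)).
    apply ex_derive_continuous_R. auto_derive. side_conditions.
  - apply (filterlim_at_right_continuous (fun x => - (2 / (r * sqrt (1 + r * x))))).
    apply ex_derive_continuous_R. auto_derive.
    rewrite Rmult_0_r, Rplus_0_r, sqrt_1. side_conditions.
  - apply (filterlim_squeeze_0 _ _ (fun x => 2 / r * (Rpower x 0 / Rpower (1 + r * x) (/ 2)))).
    + exists 0. intros x Hx. rewrite Rpower_O, Rpower_sqrt by nra.
      assert (Hs := sqrt_lt_R0 (1 + r * x) ltac:(nra)).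
      rewrite Rabs_Ropp, Rabs_pos_eq by (apply Rlt_le, Rdiv_lt_0_compat; nra).
      right. field. lra.
    + apply filterlim_scal_0; [typeclasses eauto|]. apply filterlim_Rpower_ratio_p_infty; lra.
Qed.

Lemma is_RInt_gen_beta_half_1 r : 0 < r ->
  is_RInt_gen (beta_kernel r (/ 2) 1) (at_right 0) (Rbar_locally p_infty) (2 / sqrt r).
Proof.
  intros Hr. assert (Hsr := sqrt_lt_R0 r Hr).
  apply (is_RInt_gen_ext_pos _ _ at_right_0_pos p_infty_pos
           (fun x => / (sqrt x * ((1 + r * x) * sqrt (1 + r * x))))).
  { intros x Hx. unfold beta_kernel. replace (/ 2 - 1) with (- / 2) by field.
    assert (Hs := sqrt_lt_R0 (1 + r * x) ltac:(nra)). assert (Hs' := sqrt_lt_R0 x Hx).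
    rewrite Rpower_Ropp, Rpower_plus_1, !Rpower_sqrt by nra. field. split; nra. }
  apply (is_RInt_gen_value _ (2 / sqrt r - 0)); [ring|].
  apply (is_RInt_gen_antiderivative _ _ at_right_0_pos p_infty_pos
           (fun x => 2 * sqrt x / sqrt (1 + r * x))).
  - intros x Hx. assert (Hs := sqrt_lt_R0 (1 + r * x) ltac:(nra)). assert (Hs' := sqrt_lt_R0 x Hx).
    auto_derive; [side_conditions|].
    assert (Hv := sqrt_sqrt (1 + r * x) ltac:(nra)). assert (Hu := sqrt_sqrt x ltac:(nra)).
    set (v := sqrt (1 + r * x)) in *. set (u := sqrt x) in *. clearbody v u.
    transitivity ((v * v - r * (u * u)) / (u * (v * v) * v)); [field; lra|].
    rewrite Hv, Hu. field. split; nra.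
  - intros x Hx. assert (Hs := sqrt_lt_R0 (1 + r * x) ltac:(nra)). assert (Hs' := sqrt_lt_R0 x Hx).
    apply ex_derive_continuous_R. auto_derive. side_conditions.
  - apply (filterlim_squeeze_0 _ _ (fun x => 2 * (Rpower x (/ 2) / Rpower (1 + r * x) (/ 2)))).
    + exists (mkposreal 1 Rlt_0_1). intros x _ Hx. rewrite !Rpower_sqrt by nra.
      assert (Hs := sqrt_lt_R0 (1 + r * x) ltac:(nra)). assert (Hs' := sqrt_lt_R0 x Hx).
      rewrite Rabs_pos_eq by (apply Rlt_le, Rdiv_lt_0_compat; nra). right. field. lra.
    + apply filterlim_scal_0; [typeclasses eauto|]. apply filterlim_Rpower_ratio_at_right_0; lra.
  - apply (filterlim_ext_loc (fun x => 2 / sqrt (Rpower x (Ropp 1) + r))).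
    { exists 0. intros x Hx. rewrite Rpower_Ropp, Rpower_1 by lra.
      assert (Hs := sqrt_lt_R0 (1 + r * x) ltac:(nra)). assert (Hs' := sqrt_lt_R0 x Hx).
      replace (/ x + r) with ((1 + r * x) / x) by (field; lra).
      rewrite sqrt_div_alt by lra. field. lra. }
    apply (filterlim_comp _ _ _ (fun x => Rpower x (Ropp 1)) (fun u => 2 / sqrt (u + r)) _ (locally 0));
      [apply filterlim_Rpower_p_infty; lra|].
    assert (Hc : continuous (fun u => 2 / sqrt (u + r)) 0).
    { apply ex_derive_continuous_R. auto_derive. rewrite Rplus_0_l. repeat split; auto. lra. }
    unfold continuous in Hc. rewrite Rplus_0_l in Hc. exact Hc.
Qed.

Lemma is_derive_atan y : is_derive atan y (/ (1 + y ^ 2)).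
Proof. apply is_derive_Reals, derivable_pt_lim_atan. Qed.

Lemma atan_continuous y : continuous atan y.
Proof. apply ex_derive_continuous_R. eexists. apply is_derive_atan. Qed.

Lemma is_derive_atan_sqrt r x : 0 < r -> 0 < x ->
  is_derive (fun x => 2 / sqrt r * atan (sqrt r * sqrt x)) x (/ (sqrt x * (1 + r * x))).
Proof.
  intros Hr Hx. assert (Hsr := sqrt_lt_R0 r Hr). assert (Hs := sqrt_lt_R0 x Hx).
  assert (H1 : is_derive (fun x => sqrt r * sqrt x) x (sqrt r * / (2 * sqrt x)))
    by (auto_derive; [lra | field; lra]).
  assert (H := is_derive_comp atan _ x _ _ (is_derive_atan (sqrt r * sqrt x)) H1).
  apply (is_derive_scal _ _ (2 / sqrt r) _) in H.
  replace (/ (sqrt x * (1 + r * x)))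
    with (2 / sqrt r * scal (sqrt r * / (2 * sqrt x)) (/ (1 + (sqrt r * sqrt x) ^ 2))); [exact H|].
  unfold scal; simpl; unfold mult; simpl.
  replace (sqrt r * sqrt x * (sqrt r * sqrt x * 1)) with ((sqrt r * sqrt r) * (sqrt x * sqrt x)) by ring.
  rewrite !sqrt_sqrt by lra. field. split; nra.
Qed.

Lemma is_RInt_gen_beta_half_half r : 0 < r ->
  is_RInt_gen (beta_kernel r (/ 2) (/ 2)) (at_right 0) (Rbar_locally p_infty) (PI / sqrt r).
Proof.
  intros Hr. assert (Hsr := sqrt_lt_R0 r Hr).
  apply (is_RInt_gen_ext_pos _ _ at_right_0_pos p_infty_pos (fun x => / (sqrt x * (1 + r * x)))).
  { intros x Hx. unfold beta_kernel. replace (/ 2 - 1) with (- / 2) by field.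
    assert (Hs' := sqrt_lt_R0 x Hx). replace (/ 2 + / 2) with 1 by field.
    rewrite Rpower_Ropp, Rpower_1, !Rpower_sqrt by nra. field. split; nra. }
  apply (is_RInt_gen_value _ (2 / sqrt r * (PI / 2 - 0) - 2 / sqrt r * atan (sqrt r * sqrt 0))).
  { rewrite sqrt_0, Rmult_0_r, atan_0. field. lra. }
  apply (is_RInt_gen_antiderivative _ _ at_right_0_pos p_infty_pos
           (fun x => 2 / sqrt r * atan (sqrt r * sqrt x))).
  - intros x Hx. now apply is_derive_atan_sqrt.
  - intros x Hx. assert (Hs' := sqrt_lt_R0 x Hx).
    apply ex_derive_continuous_R. auto_derive. side_conditions.
  - apply (filterlim_at_right_continuous (fun x => 2 / sqrt r * atan (sqrt r * sqrt x))).
    apply (continuous_comp sqrt (fun u => 2 / sqrt r * atan (sqrt r * u))).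
    { apply continuity_pt_filterlim, continuity_pt_sqrt. lra. }
    apply (continuous_comp (fun u => sqrt r * u) (fun v => 2 / sqrt r * atan v)).
    { apply ex_derive_continuous_R. auto_derive. auto. }
    apply (continuous_comp atan (fun v => 2 / sqrt r * v)); [apply atan_continuous|].
    apply ex_derive_continuous_R. auto_derive. auto.
  - apply (filterlim_ext_loc (fun x => 2 / sqrt r * (PI / 2 - atan (/ sqrt r * Rpower x (- / 2))))).
    { exists 0. intros x Hx. assert (Hs' := sqrt_lt_R0 x Hx). rewrite Rpower_Ropp, Rpower_sqrt by lra.
      replace (/ sqrt r * / sqrt x) with (/ (sqrt r * sqrt x)) by (field; lra).
      rewrite atan_inv by nra. ring. }
    apply (filterlim_comp _ _ _ (fun x => / sqrt r * Rpower x (- / 2))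
             (fun u => 2 / sqrt r * (PI / 2 - atan u)) _ (locally 0)).
    { apply filterlim_scal_0; [typeclasses eauto|]. apply filterlim_Rpower_p_infty. lra. }
    assert (Hc : continuous (fun u => 2 / sqrt r * (PI / 2 - atan u)) 0).
    { apply (continuous_comp atan (fun v => 2 / sqrt r * (PI / 2 - v))); [apply atan_continuous|].
      apply ex_derive_continuous_R. auto_derive. auto. }
    unfold continuous in Hc. rewrite atan_0 in Hc. exact Hc.
Qed.

Lemma beta_value_succ_l r i j : 0 < r ->
  beta_value r (half_succ i + 1) (half_succ j)
  = half_succ i / ((half_succ i + half_succ j) * r) * beta_value r (half_succ i) (half_succ j).
Proof.
  intros Hr. unfold beta_value.
  replace (half_succ i + 1 + half_succ j) with (half_succ (i + j + 1) + 1)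
    by (rewrite <- half_succ_add; ring).
  rewrite !Gamma_half_succ_succ, Rpower_plus_1 by auto. rewrite <- half_succ_add.
  assert (H1 := Gamma_half_succ_pos i). assert (H2 := Gamma_half_succ_pos (i + j + 1)).
  rewrite <- half_succ_add in H2.
  assert (H3 := Rpower_pos r (half_succ i)).
  assert (H4 := half_succ_pos i). assert (H5 := half_succ_pos j).
  field. repeat split; lra.
Qed.

Lemma beta_value_succ_r r i j : 0 < r ->
  beta_value r (half_succ i) (half_succ j + 1)
  = beta_value r (half_succ i) (half_succ j) - r * beta_value r (half_succ i + 1) (half_succ j).
Proof.
  intros Hr. rewrite beta_value_succ_l by auto. unfold beta_value.
  replace (half_succ i + (half_succ j + 1)) with (half_succ (i + j + 1) + 1)
    by (rewrite <- half_succ_add; ring).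
  rewrite !Gamma_half_succ_succ. rewrite <- half_succ_add.
  assert (H1 := Gamma_half_succ_pos i). assert (H2 := Gamma_half_succ_pos (i + j + 1)).
  rewrite <- half_succ_add in H2.
  assert (H3 := Rpower_pos r (half_succ i)).
  assert (H4 := half_succ_pos i). assert (H5 := half_succ_pos j).
  field. repeat split; lra.
Qed.

Lemma Gamma_3_half : Gamma (/ 2 + 1) = / 2 * Gamma (/ 2).
Proof. rewrite <- half_succ_0. apply Gamma_half_succ_succ. Qed.

Lemma Gamma_2 : Gamma (1 + 1) = 1.
Proof.
  replace (1 + 1) with (half_succ 1 + 1) by (rewrite half_succ_1; ring).
  rewrite Gamma_half_succ_succ, half_succ_1.
  rewrite (Gamma_of_is_RInt_gen _ _ is_RInt_gen_Gamma_1). ring.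
Qed.

(* Induction on [b] by steps of 2, each row [b = 1/2] and [b = 1] being done by induction on [a]. *)
Lemma is_RInt_gen_beta_half_succ r i j : 0 < r ->
  is_RInt_gen (beta_kernel r (half_succ i) (half_succ j)) (at_right 0) (Rbar_locally p_infty)
    (beta_value r (half_succ i) (half_succ j)).
Proof.
  intros Hr. assert (Hsr := sqrt_lt_R0 r Hr).
  assert (Hg := Gamma_half_succ_pos 0). rewrite half_succ_0 in Hg.
  assert (G1 := Gamma_of_is_RInt_gen _ _ is_RInt_gen_Gamma_1).
  assert (Hrow : forall q, (q = 0 \/ q = 1)%nat -> forall i,
    is_RInt_gen (beta_kernel r (half_succ i) (half_succ q)) (at_right 0) (Rbar_locally p_infty)
      (beta_value r (half_succ i) (half_succ q))).
  { intros q Hq. apply Nat.pair_induction; [now intros ? ? -> | | |].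
    - destruct Hq as [-> | ->].
      + rewrite half_succ_0. eapply is_RInt_gen_value; [| exact (is_RInt_gen_beta_half_half r Hr)].
        unfold beta_value. replace (/ 2 + / 2) with 1 by field.
        rewrite G1, Gamma_half_sqr, Rpower_sqrt by auto. field. lra.
      + rewrite half_succ_0, half_succ_1.
        eapply is_RInt_gen_value; [| exact (is_RInt_gen_beta_half_1 r Hr)].
        unfold beta_value. rewrite Gamma_3_half, G1, Rpower_sqrt by auto. field. lra.
    - destruct Hq as [-> | ->].
      + rewrite half_succ_0, half_succ_1.
        eapply is_RInt_gen_value; [| exact (is_RInt_gen_beta_1_half r Hr)].
        unfold beta_value. replace (1 + / 2) with (/ 2 + 1) by ring.
        rewrite Gamma_3_half, G1, Rpower_1 by auto. field. lra.
      + rewrite half_succ_1. eapply is_RInt_gen_value; [| exact (is_RInt_gen_beta_1_1 r Hr)].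
        unfold beta_value. rewrite Gamma_2, G1, Rpower_1 by auto. field. lra.
    - intros n Hn _. rewrite half_succ_SS, beta_value_succ_l by auto.
      apply is_RInt_gen_beta_succ_l; auto using half_succ_pos. }
  revert i. pattern j. apply Nat.pair_induction; [now intros ? ? -> | apply Hrow; auto | apply Hrow; auto |].
  intros n Hn _ i. rewrite half_succ_SS, beta_value_succ_r by auto.
  apply is_RInt_gen_beta_succ_r; auto. rewrite <- half_succ_SS. apply Hn.
Qed.

(** * Snedecor's F-distribution *)

Section FDistribution.

Variables m n : nat.
Hypothesis Hm : (0 < m)%nat.
Hypothesis Hn : (0 < n)%nat.

Lemma INR_m_pos : 0 < INR m.
Proof. now apply lt_0_INR. Qed.

Lemma INR_n_pos : 0 < INR n.
Proof. now apply lt_0_INR. Qed.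

Let r := INR m / INR n.

Lemma ratio_pos : 0 < r.
Proof. apply Rdiv_lt_0_compat; [apply INR_m_pos | apply INR_n_pos]. Qed.

Lemma Gamma_half_m_pos : 0 < Gamma (INR m / 2).
Proof. rewrite <- half_succ_pred by auto. apply Gamma_half_succ_pos. Qed.

Lemma Gamma_half_n_pos : 0 < Gamma (INR n / 2).
Proof. rewrite <- half_succ_pred by auto. apply Gamma_half_succ_pos. Qed.

Lemma Gamma_half_sum_pos : 0 < Gamma ((INR n + INR m) / 2).
Proof.
  replace ((INR n + INR m) / 2) with (half_succ (pred m) + half_succ (pred n))
    by (rewrite !half_succ_pred by auto; field).
  rewrite half_succ_add. apply Gamma_half_succ_pos.
Qed.

Lemma F_density_beta x :
  F_density m n x = beta_kernel r (INR m / 2) (INR n / 2) x / beta_value r (INR m / 2) (INR n / 2).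
Proof.
  unfold F_density, beta_kernel, beta_value, r.
  replace ((INR m - 2) / 2) with (INR m / 2 - 1) by field.
  replace (INR m / 2 + INR n / 2) with ((INR n + INR m) / 2) by field.
  assert (H1 := Gamma_half_m_pos). assert (H2 := Gamma_half_n_pos). assert (H3 := Gamma_half_sum_pos).
  assert (H4 := Rpower_pos (INR m / INR n) (INR m / 2)).
  assert (H5 := Rpower_pos (1 + INR m / INR n * x) ((INR n + INR m) / 2)).
  field. repeat split; lra.
Qed.

Lemma is_RInt_gen_F_density : is_RInt_gen (F_density m n) (at_right 0) (Rbar_locally p_infty) 1.
Proof.
  set (V := beta_value r (INR m / 2) (INR n / 2)).
  assert (HV : 0 < V).
  { unfold V, beta_value. replace (INR m / 2 + INR n / 2) with ((INR n + INR m) / 2) by field.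
    assert (H1 := Gamma_half_m_pos). assert (H2 := Gamma_half_n_pos).
    assert (H3 := Gamma_half_sum_pos). assert (H4 := Rpower_pos r (INR m / 2)).
    apply Rdiv_lt_0_compat; nra. }
  assert (H := is_RInt_gen_beta_half_succ r (pred m) (pred n) ratio_pos).
  rewrite !half_succ_pred in H by auto. fold V in H.
  apply (is_RInt_gen_scal _ (/ V)) in H.
  apply (is_RInt_gen_value _ (scal (/ V) V)); [unfold scal; simpl; unfold mult; simpl; field; lra|].
  eapply is_RInt_gen_ext; [|exact H]. apply filter_forall. intros ab x _.
  rewrite F_density_beta. unfold scal; simpl; unfold mult; simpl. fold V. unfold Rdiv. ring.
Qed.

Lemma F_density_continuous x : 0 < x -> continuous (F_density m n) x.
Proof.
  intros Hx. assert (Hr := ratio_pos). unfold r in Hr.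
  assert (H1 := Gamma_half_m_pos). assert (H2 := Gamma_half_n_pos).
  apply ex_derive_continuous_R. unfold F_density, Rpower. auto_derive. side_conditions.
  apply Rgt_not_eq, Rmult_lt_0_compat; [nra | apply exp_pos].
Qed.

Lemma F_density_pos x : 0 < x -> 0 < F_density m n x.
Proof.
  intros Hx. unfold F_density.
  assert (H1 := Gamma_half_m_pos). assert (H2 := Gamma_half_n_pos). assert (H3 := Gamma_half_sum_pos).
  apply Rdiv_lt_0_compat; repeat apply Rmult_lt_0_compat; auto; apply Rpower_pos.
Qed.

Lemma F_density_mul_id x : 0 < x -> F_density m n x * x = F_bound m n x * F_density m n 1.
Proof.
  intros Hx. assert (HM := INR_m_pos). assert (HN := INR_n_pos).
  assert (H1 := Gamma_half_m_pos). assert (H2 := Gamma_half_n_pos). assert (H3 := Gamma_half_sum_pos).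
  assert (Hr := ratio_pos). unfold r in Hr.
  unfold F_density, F_bound, Rpower.
  replace ((INR n + INR m) / (INR n + INR m * x)) with ((1 + INR m / INR n * 1) / (1 + INR m / INR n * x))
    by (field; repeat split; try lra; apply Rgt_not_eq; nra).
  rewrite (ln_div (1 + INR m / INR n * 1) (1 + INR m / INR n * x)), ln_1 by nra.
  set (LA := ln (1 + INR m / INR n * 1)). set (LB := ln (1 + INR m / INR n * x)).
  replace ((INR m + INR n) / 2 * (LA - LB)) with ((INR n + INR m) / 2 * LA + - ((INR n + INR m) / 2 * LB))
    by field.
  replace (INR m / 2 * ln x) with ((INR m - 2) / 2 * ln x + ln x) by field.
  rewrite !exp_plus, exp_Ropp, exp_ln, Rmult_0_r, exp_0 by lra.
  assert (0 < exp ((INR n + INR m) / 2 * LA)) by apply exp_pos.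
  assert (0 < exp ((INR n + INR m) / 2 * LB)) by apply exp_pos.
  field. repeat split; lra.
Qed.

Definition F_bound_elasticity (x : R) := INR m * INR n * (1 - x) / (2 * (INR n + INR m * x)).

Lemma is_derive_F_bound x : 0 < x ->
  is_derive (F_bound m n) x (F_bound m n x * F_bound_elasticity x / x).
Proof.
  intros Hx. assert (HM := INR_m_pos). assert (HN := INR_n_pos).
  unfold F_bound, F_bound_elasticity, Rpower. auto_derive.
  - repeat split; try lra; try (apply Rgt_not_eq; nra).
    apply Rmult_lt_0_compat; [lra | apply Rinv_0_lt_compat; nra].
  - unfold Rdiv. field. repeat split; try lra; apply Rgt_not_eq; nra.
Qed.

Lemma F_bound_1 : F_bound m n 1 = 1.
Proof.
  assert (HM := INR_m_pos). assert (HN := INR_n_pos).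
  unfold F_bound, Rpower. replace ((INR n + INR m) / (INR n + INR m * 1)) with 1 by (field; lra).
  rewrite ln_1, !Rmult_0_r, exp_0. ring.
Qed.

Lemma F_bound_pos x : 0 < F_bound m n x.
Proof. unfold F_bound. apply Rmult_lt_0_compat; apply Rpower_pos. Qed.

Lemma F_bound_elasticity_nonincreasing x y : 0 < x -> x <= y ->
  F_bound_elasticity y <= F_bound_elasticity x.
Proof.
  intros Hx Hxy. assert (HM := INR_m_pos). assert (HN := INR_n_pos).
  assert (Px : 0 < INR n + INR m * x) by nra. assert (Py : 0 < INR n + INR m * y) by nra.
  assert (E : F_bound_elasticity x - F_bound_elasticity y
              = INR m * INR n * (INR n + INR m) * (y - x) / (2 * (INR n + INR m * x) * (INR n + INR m * y)))
    by (unfold F_bound_elasticity; field; lra).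
  enough (0 <= INR m * INR n * (INR n + INR m) * (y - x) / (2 * (INR n + INR m * x) * (INR n + INR m * y)))
    by lra.
  apply Rmult_le_pos; [repeat apply Rmult_le_pos; lra|].
  left. apply Rinv_0_lt_compat. repeat apply Rmult_lt_0_compat; lra.
Qed.

Lemma F_bound_elasticity_pos x : 0 < x < 1 -> 0 < F_bound_elasticity x.
Proof.
  intros Hx. assert (HM := INR_m_pos). assert (HN := INR_n_pos). unfold F_bound_elasticity.
  apply Rdiv_lt_0_compat; [|nra]. apply Rmult_lt_0_compat; [nra | lra].
Qed.

Lemma F_bound_elasticity_neg x : 1 < x -> F_bound_elasticity x < 0.
Proof.
  intros Hx. assert (HM := INR_m_pos). assert (HN := INR_n_pos). unfold F_bound_elasticity.
  enough (0 < INR m * INR n * (x - 1) / (2 * (INR n + INR m * x))) by (unfold Rdiv in *; nra).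
  apply Rdiv_lt_0_compat; [|nra]. apply Rmult_lt_0_compat; [nra | lra].
Qed.

Lemma F_bound_increasing x y : 0 < x -> x < y -> y < 1 -> F_bound m n x < F_bound m n y.
Proof.
  apply (incr_function _ 0 1 (fun y => F_bound m n y * F_bound_elasticity y / y)); simpl.
  - intros z Hz _. now apply is_derive_F_bound.
  - intros z Hz0 Hz1. assert (H := F_bound_elasticity_pos z (conj Hz0 Hz1)).
    assert (HB := F_bound_pos z). apply Rdiv_lt_0_compat; nra.
Qed.

Lemma F_bound_decreasing x y : 1 < x -> x < y -> F_bound m n y < F_bound m n x.
Proof.
  intros Hx Hxy. enough (- F_bound m n x < - F_bound m n y) by lra.
  refine (incr_function (fun y => - F_bound m n y) 1 p_infty
            (fun y => - (F_bound m n y * F_bound_elasticity y / y)) _ _ x y Hx Hxy I); simpl.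
  - intros z Hz _. apply (is_derive_opp (F_bound m n)), is_derive_F_bound. lra.
  - intros z Hz _. assert (H := F_bound_elasticity_neg z Hz).
    assert (HB := F_bound_pos z). enough (F_bound m n z * F_bound_elasticity z / z < 0) by lra.
    assert (F_bound m n z * F_bound_elasticity z < 0) by nra.
    unfold Rdiv. assert (0 < / z) by (apply Rinv_0_lt_compat; lra). nra.
Qed.

Lemma F_upper_tail_le x : 1 <= x -> F_upper_tail m n x <= F_bound m n x.
Proof.
  apply (upper_tail_le_B _ _ _ F_density_continuous F_density_pos is_RInt_gen_F_density
           (fun x _ => F_bound_pos x) F_bound_1 is_derive_F_bound
           F_bound_elasticity_nonincreasing F_density_mul_id).
Qed.

Lemma F_cdf_le x : 0 < x <= 1 -> F_cdf m n x <= F_bound m n x.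
Proof.
  apply (cdf_le_B _ _ _ F_density_continuous F_density_pos is_RInt_gen_F_density
           (fun x _ => F_bound_pos x) F_bound_1 is_derive_F_bound
           F_bound_elasticity_nonincreasing F_density_mul_id).
Qed.

End FDistribution.

Theorem corollary10 (m n : nat) (Hm : (0 < m)%nat) (Hn : (0 < n)%nat) :
  (forall x : R, 1 <= x -> F_upper_tail m n x <= F_bound m n x) /\
  (forall x : R, 0 < x <= 1 -> F_cdf m n x <= F_bound m n x) /\
  (forall x y : R, 0 < x -> x < y -> y < 1 -> F_bound m n x < F_bound m n y) /\
  (forall x y : R, 1 < x -> x < y -> F_bound m n y < F_bound m n x).
Proof.
  repeat split.
  - now apply F_upper_tail_le.
  - now apply F_cdf_le.
  - now apply F_bound_increasing.
  - now apply F_bound_decreasing.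
Qed.
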